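(* Let $S$ and $A$ be nonempty Borel spaces and $q(dy|x,a)$ a signed kernel as in the context, and suppose that (b) for each bounded continuous $f$ on $S$, $(x,a)\mapsto\int_S f(y)\tilde q(dy|x,a)/q_x(a)$ is continuous on $S\times A$, and (c) $(x,a)\mapsto q_x(a)$ is continuous on $S\times A$. Then: (a) for each lower semicontinuous function $c:S\times A\to[0,\infty]$, the function $(x,a)\mapsto c(x,a)/q_x(a)$ is lower semicontinuous on $S\times A$; and for each bounded continuous function $f$ on $S$, $(x,a)\mapsto\int_S f(y)q(dy|x,a)$ is continuous on $S\times A$; (b) for each lower semicontinuous function $f:S\to[0,\infty]$, the function $(x,a)\mapsto\int_S f(y)\tilde q(dy|x,a)\in[0,\infty]$ is lower semicontinuous on $S\times A$.
   Context: $S$ and $A$ are nonempty Borel spaces (metrizable), and $q(dy|x,a)$ is a signed kernel on $\mathcal B(S)$ given $(x,a)\in S\times A$ such that $\tilde q(\Gamma|x,a):=q(\Gamma\setminus\{x\}|x,a)\ge0$ for all $\Gamma\in\mathcal B(S)$, $q(S|x,a)=0$, and, with $q_x(a):=-q(\{x\}|x,a)\ge0$, $\sup_{a\in A}q_x(a)<\infty$ for each $x\in S$. Conventions: $0/0:=0$, $0\cdot\infty:=0$, $c/0:=+\infty$ for $c>0$. *)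

From HB Require Import structures.
From mathcomp Require Import all_boot all_order all_algebra.
From mathcomp Require Import all_classical all_reals all_analysis.
From mathcomp Require Import measurable_realfun.

Set Implicit Arguments.
Unset Strict Implicit.
Unset Printing Implicit Defensive.

Import Order.TTheory GRing.Theory Num.Theory.
Import numFieldNormedType.Exports.

Local Open Scope classical_set_scope.
Local Open Scope ring_scope.

Definition separable_space (T : topologicalType) : Prop :=
  exists D : set T, countable D /\ dense D.

(* A Polish space is represented as a separable, Hausdorff (i.e. metric),
   complete (pseudo)metric space X; S is a Borel space when there is a
   topological embedding e : S -> X (continuous, injective, open onto its
   image) whose range is a Borel subset of X. *)
Definition borel_space (R : realType) (S : pseudoMetricType R) : Prop :=
  exists (X : completePseudoMetricType R) (e : S -> X),
    separable_space X /\ hausdorff_space X /\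
    injective e /\ continuous e /\
    (forall U : set S, open U ->
       exists V : set X, open V /\ e @` U = range e `&` V) /\
    <<s @open X >> (range e).

Definition borel (T : ptopologicalType) := g_sigma_algebraType (@open T).

Definition charge_integral d (T : measurableType d) (R : realType)
    (nu : {charge set T -> \bar R}) (D : set T) (f : T -> \bar R) : \bar R :=
  let PN := cid (Hahn_decomposition nu) in
  let N := cid (projT2 PN) in
  (\int[jordan_pos (projT2 N)]_(y in D) f y
   - \int[jordan_neg (projT2 N)]_(y in D) f y)%E.

(* Division on [0, +oo] by a real number, with the conventions
   0/0 := 0, c/0 := +oo for c > 0. *)
Definition ediv0 (R : realType) (c : \bar R) (r : R) : \bar R :=
  if r == 0 then (if c == 0%E then 0%E else +oo%E) else (c * (r^-1)%:E)%E.

From HB Require Import structures.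
From mathcomp Require Import all_boot all_order all_algebra.
From mathcomp Require Import all_classical all_reals all_analysis.
From mathcomp Require Import measurable_realfun.
From mathcomp Require Import ring lra.

(* Everything rests on the positivity of [~q]: off the diagonal, q(.|x,a) agrees
   with the positive part of its Jordan decomposition and has total mass q_x(a).
   Hence for bounded continuous f, int f d~q = (int f d~q / q_x) * q_x is
   continuous by (b) and (c) -- both sides vanish where q_x(a) = 0 -- and
   int f dq = int f d~q - f(x) q_x(a) by splitting off the atom {x}.  A nonnegative
   lower semicontinuous f is the increasing limit of the bounded Lipschitz
   functions y |-> inf_z (min(f z, n) + n d(y, z)), so by monotone convergence
   int f d~q is a supremum of continuous functions of (x, a). *)

Set Implicit Arguments.
Unset Strict Implicit.
Unset Printing Implicit Defensive.

Import Order.TTheory GRing.Theory Num.Theory.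
Import numFieldNormedType.Exports.

Local Open Scope classical_set_scope.
Local Open Scope ring_scope.

Lemma lte_dense_EFin (R : realType) (x y : \bar R) :
  (x < y)%E -> exists r : R, (x < r%:E < y)%E.
Proof.
case: x => [s||]; case: y => [t||] //= xy.
- move: xy; rewrite lte_fin => st.
  by exists ((s + t) / 2); rewrite !lte_fin; apply/andP; split; lra.
- by exists (s + 1); rewrite ltry lte_fin andbT; lra.
- by exists (t - 1); rewrite ltNye lte_fin /=; lra.
- by exists 0; rewrite ltNye ltry.
Qed.

Lemma lower_semicontinuous_continuous_approx (R : realType) (X : topologicalType)
    (F : nat -> X -> R) (G : X -> \bar R) :
  (forall n, continuous (F n)) -> (forall n p, ((F n p)%:E <= G p)%E) ->
  (forall p a, (a%:E < G p)%E -> exists n, a < F n p) ->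
  lower_semicontinuous G.
Proof.
move=> cF FG FGa p a /FGa [n aF].
exists [set p' | a < F n p']; first exact: cvgr_gt (cF n p) _ aF.
by move=> p' /= ap'; rewrite (lt_le_trans _ (FG n p')) // lte_fin.
Qed.

Lemma borel_space_closed_set1 (R : realType) (S : pseudoMetricType R) :
  borel_space S -> forall x : S, closed [set x].
Proof.
move=> [X [e [_ [hX [ie [ce _]]]]]] x.
have -> : [set x] = e @^-1` [set e x].
  by apply/seteqP; split => [y -> //|y /ie].
apply: preimage_closed; first by move=> y _; exact: ce.
exact: accessible_closed_set1 (hausdorff_accessible hX) (e x).
Qed.

Section borel_measurable.
Context (R : realType) (T : ptopologicalType).

Lemma open_measurable_borel (U : set T) : open U -> measurable (U : set (borel T)).
Proof. by move=> oU; apply: sub_sigma_algebra. Qed.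

Lemma continuous_measurable_borel (h : T -> R) :
  continuous h -> measurable_fun [set: borel T] h.
Proof.
move=> ch; apply: (measurability _ (RGenOpens.measurableE R)).
move=> _ [_ [a [b ->]] <-]; apply: measurableI => //.
by apply: open_measurable_borel; move/continuousP: ch; apply; exact: interval_open.
Qed.

Lemma lsc_measurable_borel (f : T -> \bar R) :
  lower_semicontinuous f -> measurable_fun [set: borel T] f.
Proof.
move=> lscf; apply: (measurability _ (ErealGenOInfty.measurableE R)).
move=> /= _ [_ [a ->]] <-; apply: measurableI => //; apply: open_measurable_borel.
by rewrite preimage_itvoy; move/lower_semicontinuousP : lscf; exact.
Qed.

End borel_measurable.

(* The Pasch-Hausdorff envelope of [min(f, n)]: an [n]-Lipschitz minorant of
   [f] bounded by [n], which increases to [f] when [f] is lower semicontinuous. *)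
Section lipschitz_envelope.
Context (R : realType) (S : pseudoMetricType R) (f : S -> \bar R).
Hypothesis f_ge0 : forall y, (0 <= f y)%E.
Local Open Scope ereal_scope.

Let env_term (n : nat) (y z : S) := mine (f z) n%:R%:E + n%:R%:E * edist (y, z).

Let env (n : nat) (y : S) := ereal_inf [set env_term n y z | z in [set: S]].

Let env_ge0 n y : 0 <= env n y.
Proof.
apply: le_ereal_inf_tmp => _ [z _ <-]; apply: adde_ge0.
  by rewrite le_min f_ge0 lee_fin ler0n.
by apply: mule_ge0; [rewrite lee_fin ler0n|exact: edist_ge0].
Qed.

Let env_le n y : env n y <= mine (f y) n%:R%:E.
Proof.
apply: (@le_trans _ _ (env_term n y y)); first by apply: ereal_inf_lbound; exists y.
by rewrite /env_term edist_refl mule0 adde0.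
Qed.

Let env_fin_num n y : env n y \is a fin_num.
Proof.
rewrite ge0_fin_numE ?env_ge0 // (le_lt_trans (env_le n y)) //.
by rewrite (le_lt_trans _ (ltry n%:R)) // ge_min lexx orbT.
Qed.

Definition lip_env (n : nat) (y : S) : R := fine (env n y).

Let lip_envE n y : (lip_env n y)%:E = env n y.
Proof. by rewrite fineK. Qed.

Lemma lip_env_ge0 n y : (0 <= lip_env n y)%R.
Proof. by rewrite -lee_fin lip_envE. Qed.

Lemma lip_env_le_nat n y : (lip_env n y <= n%:R)%R.
Proof. by rewrite -lee_fin lip_envE (le_trans (env_le n y)) // ge_min lexx orbT. Qed.

Lemma lip_env_le n y : (lip_env n y)%:E <= f y.
Proof. by rewrite lip_envE (le_trans (env_le n y)) // ge_min lexx. Qed.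

Lemma lip_env_nondecreasing y : {homo lip_env^~ y : m n / (m <= n)%N >-> (m <= n)%R}.
Proof.
move=> m n mn; rewrite -lee_fin !lip_envE; apply: le_ereal_inf_tmp => _ [z _ <-].
apply: (le_trans (ereal_inf_lbound _)); first by exists z.
apply: leeD; first by rewrite le_min !ge_min lexx lee_fin ler_nat mn orbT.
by apply: lee_wpmul2r => //; rewrite lee_fin ler_nat.
Qed.

Let env_lipschitz n y y' (e : R) : (0 <= e)%R -> edist (y, y') <= e%:E ->
  env n y <= (n%:R * e)%:E + env n y'.
Proof.
move=> e0 ed; rewrite -leeBlDl //; apply: le_ereal_inf_tmp => _ [z _ <-].
rewrite leeBlDl //; apply: (le_trans (ereal_inf_lbound _)); first by exists z.
rewrite /env_term addeCA; apply: leeD => //.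
apply: (le_trans (lee_wpmul2l _ (edist_triangle y y' z))); first by rewrite lee_fin.
rewrite ge0_muleDr // EFinM; apply: leeD => //.
by apply: lee_wpmul2l => //; rewrite lee_fin.
Qed.

Lemma lip_env_continuous n : continuous (lip_env n).
Proof.
move=> y; apply/(@pseudometric_normed_Zmodule.cvgrPdist_le _ R^o) => e e0.
have e1 : (0 < e / (n%:R + 1))%R by rewrite divr_gt0 // ltr_wpDl.
have ne : (n%:R * (e / (n%:R + 1)) <= e)%R.
  rewrite mulrA ler_pdivrMr ?ltr_wpDl //.
  have : (0 <= n%:R :> R)%R by [].
  nra.
near=> y'.
have yy' : ball y (e / (n%:R + 1)) y' by near: y'; exact: nbhsx_ballx.
have ed := edist_fin (xy := (y, y')) e1 yy'.
have ed' : edist (y', y) <= (e / (n%:R + 1))%:E by rewrite edist_sym.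
have := env_lipschitz n (ltW e1) ed.
have := env_lipschitz n (ltW e1) ed'.
rewrite -!lip_envE -!EFinD !lee_fin => h1 h2.
rewrite ler_norml; apply/andP; split; lra.
Unshelve. all: by end_near. Qed.

Hypothesis f_lsc : lower_semicontinuous f.

Lemma lip_env_large y (a : R) : a%:E < f y -> exists n, (a <= lip_env n y)%R.
Proof.
move=> ay.
have [a0|a0] := lerP a 0; first by exists 0%N; exact: le_trans a0 (lip_env_ge0 0 y).
have [V Vy aV] := f_lsc ay.
move/nbhs_ballP: Vy => [r r0 rV].
pose n := (Num.truncn (a + a / r)).+1.
have an : (a + a / r < n%:R)%R by exact: truncnS_gt.
have ar : (a / r * r = a)%R by rewrite divfK // gt_eqF.
have ar0 : (0 < a / r)%R by rewrite divr_gt0.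
exists n; rewrite -lee_fin lip_envE; apply: le_ereal_inf_tmp => _ [z _ <-].
rewrite /env_term.
have [yz|yz] := pselect (ball y r z).
- apply: lee_paddr; first by apply: mule_ge0; [rewrite lee_fin ler0n|exact: edist_ge0].
  rewrite le_min (ltW (aV _ (rV _ yz))) lee_fin /=; lra.
- have rz : r%:E <= edist (y, z).
    by rewrite leNgt; apply/negP => /edist_lt_ball.
  apply: lee_paddl; first by rewrite le_min f_ge0 lee_fin ler0n.
  apply: (le_trans _ (lee_wpmul2l _ rz)); last by rewrite lee_fin ler0n.
  rewrite -EFinM lee_fin; nra.
Qed.

Lemma lip_env_cvg y : (fun n => (lip_env n y)%:E) @ \oo --> f y.
Proof.
have nd : nondecreasing_seq (fun n => (lip_env n y)%:E).
  by move=> m n mn; rewrite lee_fin lip_env_nondecreasing.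
suff <- : ereal_sup (range (fun n => (lip_env n y)%:E)) = f y.
  exact: ereal_nondecreasing_cvgn.
apply/le_anti/andP; split.
  by apply: ge_ereal_sup => _ [n _ <-]; exact: lip_env_le.
rewrite leNgt; apply/negP => /lte_dense_EFin [r /andP[supr /lip_env_large [n rn]]].
have : (lip_env n y)%:E <= ereal_sup (range (fun n => (lip_env n y)%:E)).
  by apply: ereal_sup_ubound; exists n.
by rewrite leNgt (lt_le_trans supr) // lee_fin.
Qed.

End lipschitz_envelope.

Section ediv0_lsc.
Context (R : realType) (X : topologicalType).
Local Open Scope ereal_scope.

Lemma ediv0_ge0 (c : \bar R) (r : R) : 0 <= c -> (0 <= r)%R -> 0 <= ediv0 c r.
Proof.
move=> c0 r0; rewrite /ediv0; case: ifPn => _; first by case: ifPn.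
by apply: mule_ge0 => //; rewrite lee_fin invr_ge0.
Qed.

Lemma ediv0_gt (c : \bar R) (r a b : R) : 0 <= c -> (0 <= r)%R ->
  b%:E < c -> (a * r < b)%R -> a%:E < ediv0 c r.
Proof.
move=> c0 r0 bc arb; rewrite /ediv0; case: ifPn => [/eqP r00|rn0].
  rewrite r00 mulr0 in arb.
  by rewrite gt_eqF ?ltry // (lt_trans _ bc) // lte_fin.
have rp : (0 < r)%R by rewrite lt_def rn0 r0.
by rewrite lte_pdivlMr // (lt_trans _ bc) // -EFinM lte_fin.
Qed.

Lemma ediv0_lsc (c : X -> \bar R) (Q : X -> R) : (forall p, 0 <= c p) ->
  (forall p, (0 <= Q p)%R) -> lower_semicontinuous c -> continuous Q ->
  lower_semicontinuous (fun p => ediv0 (c p) (Q p)).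
Proof.
move=> c0 Q0 lc cQ p a acQ.
have [a0|a0] := ltrP a 0.
  exists setT; first exact: filterT.
  by move=> y _; rewrite (lt_le_trans _ (ediv0_ge0 (c0 y) (Q0 y))) // lte_fin.
have [b /andP[ab bc]] : exists b : R, (a * Q p)%:E < b%:E < c p.
  apply: lte_dense_EFin; move: acQ; rewrite /ediv0; case: ifPn => [/eqP ->|Qp0].
    have a0E : 0 <= a%:E by rewrite lee_fin.
    by rewrite mulr0; case: ifPn => [_|cp0 _]; [rewrite ltNge a0E|rewrite lt_def cp0 c0].
  by rewrite lte_pdivlMr ?EFinM // lt_def Qp0 Q0.
have [V Vp cV] := lc p b bc.
have aQ : \forall p' \near p, (a * Q p' < b)%R.
  by apply: cvgr_lt ab; apply: cvgM; [exact: cvg_cst|exact: cQ].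
exists (V `&` [set p' | (a * Q p' < b)%R]); first exact: filterI.
by move=> y [Vy aQy]; exact: ediv0_gt (c0 y) (Q0 y) (cV _ Vy) aQy.
Qed.

End ediv0_lsc.

Section charge_integral_theory.
Context d (T : measurableType d) (R : realType).
Local Open Scope ereal_scope.
Implicit Types (nu : {charge set T -> \bar R}) (D : set T).

Definition charge_hahnP nu := projT2 (cid (projT2 (cid (Hahn_decomposition nu)))).
Definition charge_pos nu := jordan_pos (charge_hahnP nu).
Definition charge_neg nu := jordan_neg (charge_hahnP nu).

Lemma charge_integralE nu D f :
  charge_integral nu D f = \int[charge_pos nu]_(y in D) f y - \int[charge_neg nu]_(y in D) f y.
Proof. by []. Qed.

Lemma charge_pos_negE nu B : measurable B -> nu B = charge_pos nu B - charge_neg nu B.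
Proof.
by move=> mB; rewrite (jordan_decomp (charge_hahnP nu) mB) /cadd /= /cscale /= mulN1e.
Qed.

Lemma abse_integral_le_cst (mu : {measure set T -> \bar R}) D (g : T -> R) (M : R) :
  measurable D -> measurable_fun D g -> (forall y, `|g y| <= M)%R ->
  `|\int[mu]_(y in D) (g y)%:E| <= M%:E * mu D.
Proof.
move=> mD mg gM; have mEg : measurable_fun D (EFin \o g) by exact/measurable_EFinP.
rewrite (le_trans (le_abse_integral _ mD mEg)) // -integral_cst //.
by apply: ge0_le_integral => //; [exact: measurableT_comp|move=> y _; rewrite lee_fin].
Qed.

Lemma bounded_integral_fin_num (mu : {finite_measure set T -> \bar R}) D (g : T -> R) (M : R) :
  measurable D -> measurable_fun D g -> (forall y, `|g y| <= M)%R ->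
  \int[mu]_(y in D) (g y)%:E \is a fin_num.
Proof.
move=> mD mg gM; rewrite fin_num_abs (le_lt_trans (abse_integral_le_cst _ mD mg gM)) //.
by rewrite ltey_eq fin_numM // fin_num_measure.
Qed.

Lemma charge_integral_setT_setC1 nu (x : T) (g : T -> R) (M : R) :
  measurable [set x] -> measurable_fun setT g -> (forall y, `|g y| <= M)%R ->
  charge_integral nu setT (fun y => (g y)%:E) =
  charge_integral nu (~` [set x]) (fun y => (g y)%:E) + (g x)%:E * nu [set x].
Proof.
move=> mx mg gM; have mxC : measurable (~` [set x]) by exact: measurableC.
have mgC : measurable_fun (~` [set x]) g := measurable_funS measurableT (@subsetT _ _) mg.
have split_at_x (mu : {measure set T -> \bar R}) :
    \int[mu]_(y in setT) (g y)%:E = \int[mu]_(y in ~` [set x]) (g y)%:E + (g x)%:E * mu [set x].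
  rewrite -(setvU [set x]) integral_setU //; last 2 first.
  - by rewrite setvU; exact/measurable_EFinP.
  - by apply/disj_setPS => y [].
  congr (_ + _); rewrite -integral_cst //; apply: eq_integral => y.
  by rewrite inE => ->.
have arith (u v s t : \bar R) : u \is a fin_num -> v \is a fin_num ->
    s \is a fin_num -> t \is a fin_num ->
    u + (g x)%:E * s - (v + (g x)%:E * t) = u - v + (g x)%:E * (s - t).
  move: u v s t => [u||] // [v||] // [s||] // [t||] // _ _ _ _.
  by rewrite -!EFinM -!EFinD; congr EFin; ring.
rewrite !charge_integralE !split_at_x (charge_pos_negE _ mx).
by apply: arith; rewrite ?fin_num_measure ?(bounded_integral_fin_num _ mxC mgC gM).
Qed.

Section nonnegative_on.
Variables (nu : {charge set T -> \bar R}) (D : set T).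
Hypothesis nu_ge0 : forall B, measurable B -> B `<=` D -> 0 <= nu B.

Lemma charge_neg_on0 B : measurable B -> B `<=` D -> charge_neg nu B = 0.
Proof.
move=> mB BD; rewrite /charge_neg jordan_negE cjordan_negE /crestr0 mem_set // /crestr.
have [_ [mN Nneg] _ _] := charge_hahnP nu.
apply/eqP; rewrite oppe_eq0 eq_le Nneg ?nu_ge0 //.
all: by [exact: measurableI|exact: subIsetr|exact: subset_trans (@subIsetl _ _ _) BD].
Qed.

Lemma charge_pos_on B : measurable B -> B `<=` D -> charge_pos nu B = nu B.
Proof. by move=> mB BD; rewrite (charge_pos_negE _ mB) charge_neg_on0 // sube0. Qed.

Hypothesis mD : measurable D.

Lemma charge_integral_on f : measurable_fun D f ->
  charge_integral nu D f = \int[charge_pos nu]_(y in D) f y.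
Proof.
by move=> mf; rewrite charge_integralE (null_set_integral mD mf (charge_neg_on0 mD (@subset_refl _ D))) sube0.
Qed.

End nonnegative_on.
End charge_integral_theory.

Section off_diagonal_kernel.
Context (R : realType) (S A : pseudoPMetricType R) (q : S -> A -> {charge set borel S -> \bar R}).
Hypothesis closed_set1 : forall x : S, closed [set x].
Hypothesis q_setD1_ge0 : forall x a (G : set (borel S)), measurable G -> (0 <= q x a (G `\ x))%E.
Hypothesis q_setT : forall x a, q x a [set: borel S] = 0%E.

(* [rate x a] is q_x(a) and [jump_integral x a] integrates against ~q(.|x,a). *)
Local Notation rate x a := (fine (- q x a [set x])%E).
Local Notation jump_integral x a f := (charge_integral (q x a) (~` [set x]) f).

Let measurable_setC1 (x : S) : measurable (~` [set x] : set (borel S)).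
Proof. by apply: open_measurable_borel; rewrite openC. Qed.

Let measurable_set1 (x : S) : measurable ([set x] : set (borel S)).
Proof. by rewrite -[[set x]]setCK; exact: measurableC. Qed.

Let measurable_funC1 (x : S) (f : borel S -> \bar R) :
  measurable_fun setT f -> measurable_fun (~` [set x] : set (borel S)) f.
Proof. exact: measurable_funS. Qed.

Lemma q_ge0_setC1 x a (B : set (borel S)) :
  measurable B -> B `<=` ~` [set x] -> (0 <= q x a B)%E.
Proof.
move=> mB Bx; suff <- : B `\ x = B by exact: q_setD1_ge0.
by apply/seteqP; split => [y []//|y By]; split => //; exact: Bx.
Qed.

Let q_setC1 x a : q x a (~` [set x]) = (- q x a [set x])%E.
Proof. by rewrite -setTD chargeD // q_setT setTI sub0e. Qed.

Lemma q_setC1E x a : q x a (~` [set x]) = (rate x a)%:E.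
Proof. by rewrite -q_setC1 fineK // fin_num_measure. Qed.

Lemma q_set1E x a : q x a [set x] = (- rate x a)%:E.
Proof. by rewrite EFinN -q_setC1E q_setC1 oppeK. Qed.

Lemma rate_ge0 x a : 0 <= rate x a.
Proof. by rewrite -lee_fin -q_setC1E q_ge0_setC1. Qed.

Lemma jump_integralE x a f : measurable_fun setT f ->
  jump_integral x a f = (\int[charge_pos (q x a)]_(y in ~` [set x]) f y)%E.
Proof.
move=> mf; have := charge_integral_on (@q_ge0_setC1 x a) (measurable_setC1 x) (measurable_funC1 mf).
exact.
Qed.

Lemma abse_jump_integral_le x a (g : S -> R) (M : R) :
  measurable_fun [set: borel S] g -> (forall y, `|g y| <= M) ->
  (`|jump_integral x a (fun y => (g y)%:E)| <= (M * rate x a)%:E)%E.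
Proof.
move=> mg gM.
have mEg : measurable_fun [set: borel S] (fun y => (g y)%:E) by exact/measurable_EFinP.
rewrite jump_integralE // EFinM -q_setC1E -(charge_pos_on (@q_ge0_setC1 x a)) //.
by apply: abse_integral_le_cst => //; exact: measurable_funS mg.
Qed.

Hypothesis weak_continuity : forall g : S -> R, continuous g ->
  (exists M : R, forall y, `|g y| <= M) ->
  continuous (fun p : S * A =>
    fine (jump_integral p.1 p.2 (fun y => (g y)%:E)) / rate p.1 p.2).
Hypothesis rate_continuous : continuous (fun p : S * A => rate p.1 p.2).

Lemma jump_integral_continuous (g : S -> R) : continuous g ->
  (exists M : R, forall y, `|g y| <= M) ->
  continuous (fun p : S * A => fine (jump_integral p.1 p.2 (fun y => (g y)%:E))).
Proof.
move=> cg [M gM].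
suff -> : (fun p : S * A => fine (jump_integral p.1 p.2 (fun y => (g y)%:E))) =
    (fun p => fine (jump_integral p.1 p.2 (fun y => (g y)%:E)) / rate p.1 p.2 * rate p.1 p.2).
  by move=> p; apply: cvgM; [exact: weak_continuity g cg (ex_intro _ M gM) p|exact: rate_continuous].
apply/funext => -[x a] /=; have [r0|r0] := eqVneq (rate x a) 0; last by rewrite divfK.
have := abse_jump_integral_le x a (continuous_measurable_borel cg) gM.
rewrite r0 !mulr0 => J0.
suff /eqP -> : jump_integral x a (fun y => (g y)%:E) == 0%E by [].
by rewrite -abse_eq0 eq_le abse_ge0 J0.
Qed.

Lemma charge_integral_continuous (g : S -> R) : continuous g ->
  (exists M : R, forall y, `|g y| <= M) ->
  continuous (fun p : S * A =>
    fine (charge_integral (q p.1 p.2) [set: borel S] (fun y => (g y)%:E))).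
Proof.
move=> cg [M gM]; have mg := continuous_measurable_borel cg.
suff -> : (fun p : S * A =>
    fine (charge_integral (q p.1 p.2) [set: borel S] (fun y => (g y)%:E))) =
    (fun p => fine (jump_integral p.1 p.2 (fun y => (g y)%:E)) - g p.1 * rate p.1 p.2).
  move=> p; apply: cvgB; first exact: jump_integral_continuous (ex_intro _ M gM) p.
  by apply: cvgM; [exact: continuous_comp cvg_fst (cg _)|exact: rate_continuous].
apply/funext => -[x a] /=.
have jump_fin : jump_integral x a (fun y => (g y)%:E) \is a fin_num.
  rewrite fin_num_abs (le_lt_trans (abse_jump_integral_le x a mg gM)) //; exact: ltry.
rewrite (charge_integral_setT_setC1 _ (measurable_set1 x) mg gM).
by rewrite q_set1E /= opprK -EFinM fineD // mulrN.
Qed.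

Lemma jump_integral_lsc (f : S -> \bar R) : (forall y, (0 <= f y)%E) ->
  lower_semicontinuous f ->
  lower_semicontinuous (fun p : S * A => jump_integral p.1 p.2 f).
Proof.
move=> f_ge0 f_lsc; have mf := lsc_measurable_borel f_lsc.
pose F n (p : S * A) := fine (jump_integral p.1 p.2 (fun y => (lip_env f n y)%:E)).
have env_bound n y : `|lip_env f n y| <= n%:R.
  by rewrite ger0_norm ?lip_env_ge0 ?lip_env_le_nat.
have env_cont n : continuous (lip_env f n) by move=> y; exact: lip_env_continuous.
have m_env n : measurable_fun [set: borel S] (lip_env f n).
  exact: continuous_measurable_borel.
have m_envE n : measurable_fun [set: borel S] (fun y => (lip_env f n y)%:E).
  exact/measurable_EFinP.
have FE n p : (F n p)%:E =
    (\int[charge_pos (q p.1 p.2)]_(y in ~` [set p.1]) (lip_env f n y)%:E)%E.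
  have J_fin : jump_integral p.1 p.2 (fun y => (lip_env f n y)%:E) \is a fin_num.
    rewrite fin_num_abs.
    exact: le_lt_trans (abse_jump_integral_le _ _ (m_env n) (env_bound n)) (ltry _).
  by rewrite fineK // jump_integralE.
apply: (@lower_semicontinuous_continuous_approx _ _ F).
- by move=> n; apply: jump_integral_continuous (ex_intro _ n%:R (env_bound n)).
- move=> n p; rewrite FE jump_integralE //; apply: ge0_le_integral => //.
  + by move=> y _; rewrite lee_fin lip_env_ge0.
  + exact: measurable_funC1.
  + exact: measurable_funC1.
  + by move=> y _; exact: lip_env_le.
- move=> [x a] r; rewrite jump_integralE //= => rJ.
  have env_cvg := @cvg_monotone_convergence _ _ _ (charge_pos (q x a)) _ (measurable_setC1 x)
    (fun n y => (lip_env f n y)%:E) (fun n => measurable_funC1 (m_envE n))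
    (fun n y _ => lip_env_ge0 f_ge0 n y)
    (fun y _ m n mn => lip_env_nondecreasing f_ge0 y mn).
  have env_lim : (\int[charge_pos (q x a)]_(y in ~` [set x])
      (fun y => limn (fun n => (lip_env f n y)%:E)) y = \int[charge_pos (q x a)]_(y in ~` [set x]) f y)%E.
    by apply: eq_integral => y _; rewrite (cvg_lim _ (@lip_env_cvg _ _ _ f_ge0 f_lsc y)).
  rewrite env_lim in env_cvg.
  have [n _ Nn] := env_cvg _ (open_ereal_gt' rJ).
  by exists n; rewrite -lte_fin FE; exact: (Nn n (leqnn n)).
Qed.

End off_diagonal_kernel.

Theorem lemmaA1 (R : realType)
  (S A : pseudoPMetricType R)
  (q : S -> A -> {charge set borel S -> \bar R}) :
  borel_space S -> borel_space A ->
  (forall G : set (borel S), measurable G ->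
     measurable_fun [set: g_sigma_algebraType (@open (S * A)%type)] (fun p => (q p.1 p.2 G : \bar R))) ->
  (forall x a (G : set (borel S)), measurable G ->
     (0 <= q x a (G `\ x))%E) ->
  (forall x a, q x a [set: borel S] = 0%E) ->
  (forall x, exists M : R, forall a, fine (- q x a [set x])%E <= M) ->
  (forall f : S -> R, continuous f -> (exists M : R, forall y, `|f y| <= M) ->
     continuous (fun p : S * A =>
       fine (charge_integral (q p.1 p.2) (~` [set p.1]) (fun y => (f y)%:E))
       / fine (- q p.1 p.2 [set p.1])%E)) ->
  continuous (fun p : S * A => fine (- q p.1 p.2 [set p.1])%E) ->
  ((forall c : S * A -> \bar R, (forall p, (0 <= c p)%E) ->
      lower_semicontinuous c ->
      lower_semicontinuous (fun p : S * A =>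
        ediv0 (c p) (fine (- q p.1 p.2 [set p.1])%E)))
   /\
   (forall f : S -> R, continuous f -> (exists M : R, forall y, `|f y| <= M) ->
      continuous (fun p : S * A =>
        fine (charge_integral (q p.1 p.2) [set: borel S] (fun y => (f y)%:E)))))
  /\
  (forall f : S -> \bar R, (forall y, (0 <= f y)%E) -> lower_semicontinuous f ->
     lower_semicontinuous (fun p : S * A =>
       charge_integral (q p.1 p.2) (~` [set p.1]) f)).
Proof.
move=> BS _ _ q_ge0 q_setT _ weak_cont rate_cont.
have closed1 := borel_space_closed_set1 BS.
split; [split|].
- move=> c c_ge0 c_lsc; apply: ediv0_lsc => // p.
  exact: rate_ge0 closed1 q_ge0 q_setT p.1 p.2.
- by move=> f cf f_bd; apply: charge_integral_continuous.
- by move=> f f_ge0 f_lsc; apply: jump_integral_lsc.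
Qed.
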